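(* Let $\eta,\lambda\in\mathbb{C}$, let $k\ge1$, and let $\tau_1,\dots,\tau_k$ be positive integers. Then in $\mathcal{F}_{\eta,\lambda}$, $$L_{-\tau_1}L_{-\tau_2}\cdots L_{-\tau_k}|\eta\rangle=(\tau_k)(\tau_k+\tau_{k-1})\cdots(\tau_k+\tau_{k-1}+\cdots+\tau_2)\,\big[\eta+(\tau_k-1)\lambda\big]\,\alpha_{-(\tau_1+\cdots+\tau_k)}|\eta\rangle+R,$$ where $R$ is a linear combination of monomials $\alpha_{-\sigma_1}\cdots\alpha_{-\sigma_j}|\eta\rangle$ with $j\ge2$. (For $k=1$ the product of partial sums is empty and equals $1$.) Consequently, if $\Delta h$ is a negative integer and $U=\sum_{|\tau|=-\Delta h}A_\tau L_{-\tau_1}\cdots L_{-\tau_{\ell(\tau)}}$ with $\tau_1\ge\cdots\ge\tau_{\ell(\tau)}$, then the coefficient of $\alpha_{\Delta h}|\eta\rangle$ in the monomial basis expansion of $U|\eta\rangle$ is $$-\frac{1}{\Delta h}\sum_{|\tau|=-\Delta h}[\tau]!\,\big[\eta+(\tau_{\ell(\tau)}-1)\lambda\big]A_\tau.$$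
   Context: The Heisenberg modes satisfy $[\alpha_m,\alpha_n]=m\delta_{m,-n}$. $\mathcal{F}_{\eta,\lambda}$ is the Fock space generated by $|\eta\rangle$, with $\alpha_n|\eta\rangle=0$ for $n>0$ and $\alpha_0|\eta\rangle=\eta|\eta\rangle$. It has basis the monomials $\alpha_{-\sigma_1}\cdots\alpha_{-\sigma_j}|\eta\rangle$ ($\sigma$ a partition) and carries the Virasoro action $$L_n=\tfrac12\sum_k:\alpha_k\alpha_{n-k}:-\lambda(n+1)\alpha_n,$$ where normal ordering places positive-index modes to the right. For a partition $\tau=(\tau_1\ge\cdots\ge\tau_\ell>0)$, define $[\tau]!=(\tau_1+\cdots+\tau_\ell)(\tau_2+\cdots+\tau_\ell)\cdots(\tau_\ell)$. *)

From HB Require Import structures.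
From mathcomp Require Import all_boot all_order all_algebra.
Set Implicit Arguments. Unset Strict Implicit. Unset Printing Implicit Defensive.
Import Order.TTheory GRing.Theory Num.Theory.
Local Open Scope ring_scope.

(* A monomial alpha_{-s_1} ... alpha_{-s_j} |eta> is encoded by the
   partition s = [:: s_1; ...; s_j] (positive parts, sorted nonincreasingly). *)
Definition mono := seq nat.

Definition state (R : Type) := seq (R * mono).

Definition coef (R : nmodType) (v : state R) (s : mono) : R :=
  \sum_(p <- v | p.2 == s) p.1.

Definition veq (R : nmodType) (v w : state R) : Prop :=
  forall s : mono, coef v s = coef w s.

Definition scale (R : pzSemiRingType) (c : R) (v : state R) : state R :=
  [seq (c * p.1, p.2) | p <- v].

Definition act (R : pzSemiRingType) (f : mono -> state R) (v : state R) : state R :=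
  flatten [seq [seq (p.1 * q.1, q.2) | q <- f p.2] | p <- v].

Definition vac (R : pzSemiRingType) : state R := [:: (1, [::])].

Section Fock.
Variables (R : numClosedFieldType) (eta lam : R).

(* Heisenberg mode alpha_n on a monomial, using [alpha_m, alpha_n] = m delta_{m,-n},
   alpha_n |eta> = 0 (n > 0), alpha_0 |eta> = eta |eta>. *)
Definition alpha_m (n : int) (s : mono) : state R :=
  match n with
  | Posz 0 => [:: (eta, s)]
  | Posz m => [:: ((m * count_mem m s)%:R, rem m s)]
  | Negz m => [:: (1, sort geq (m.+1 :: s))]
  end.

Definition alpha (n : int) (v : state R) : state R := act (alpha_m n) v.

(* normally ordered product :alpha_a alpha_b: applied to a monomial
   (the mode with the larger index acts first, i.e. stands to the right) *)
Definition nop (a b : int) (s : mono) : state R :=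
  if a < b then alpha a (alpha_m b s) else alpha b (alpha_m a s).

(* L_n = 1/2 sum_k :alpha_k alpha_{n-k}: - lam (n+1) alpha_n on a monomial s.
   All terms with |k| > |n| + |s| vanish on s, so the sum over k in Z is
   exactly the finite sum over -N <= k <= N, N = |n| + sumn s. *)
Definition L_m (n : int) (s : mono) : state R :=
  let N := (`|n|%N + sumn s)%N in
  scale (2%:R^-1)
    (flatten [seq nop (i%:Z - N%:Z) (n - (i%:Z - N%:Z)) s | i <- iota 0 (N.*2.+1)])
  ++ scale (- (lam * (n + 1)%:~R)) (alpha_m n s).

Definition Lop (n : int) (v : state R) : state R := act (L_m n) v.

Definition Lword (tau : seq nat) : state R :=
  foldr (fun t v => Lop (- (t%:Z)) v) (vac R) tau.

(* U |eta> for U = sum over the list of pairs (A, tau) of A * L_{-tau} *)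
Definition Ustate (Us : seq (R * seq nat)) : state R :=
  flatten [seq scale p.1 (Lword p.2) | p <- Us].

End Fock.

Definition is_partition (tau : seq nat) : bool :=
  sorted geq tau && all (fun t => 0 < t)%N tau.

Definition tfact (tau : seq nat) : nat :=
  (\prod_(i < size tau) sumn (drop i tau))%N.

(* Each term of [L_{-t}] raises the weight by [t] and never shortens a monomial:
   in a normally ordered product [:alpha_a alpha_b:] with [a + b = -t < 0] the
   mode acting last is a creation operator, and [alpha_{-t}] only adds a part.
   Hence only single-mode monomials feed the coefficient of
   [alpha_{-(w + t)}|eta>]; from [alpha_{-w}|eta>] it is [w] (one quadratic term
   annihilates [alpha_{-w}], the other creates [alpha_{-(w+t)}]), and from
   [|eta>] it is [eta + (t - 1) lam] (the two quadratic terms with an [alpha_0]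
   and the linear term). Induction on [tau] gives the product of partial sums;
   multiplying by [|tau|] turns it into [[tau]!], which gives the second claim. *)

From HB Require Import structures.
From mathcomp Require Import all_boot all_order all_algebra.
From mathcomp Require Import zify ring.
Import Order.TTheory GRing.Theory Num.Theory.
Local Open Scope ring_scope.
Set Implicit Arguments. Unset Strict Implicit. Unset Printing Implicit Defensive.

Section Coefficients.
Variable R : nmodType.
Implicit Types (v w : state R) (s : mono) (P Q : pred mono).

Lemma coef_cons (p : R * mono) v s :
  coef (p :: v) s = (if p.2 == s then p.1 else 0) + coef v s.
Proof. by rewrite /coef big_cons; case: ifP; rewrite ?add0r. Qed.

Lemma coef1 (c : R) s s' : coef [:: (c, s)] s' = if s == s' then c else 0.
Proof. by rewrite coef_cons /coef big_nil addr0. Qed.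

Lemma coef_cat v w s : coef (v ++ w) s = coef v s + coef w s.
Proof. by rewrite /coef big_cat. Qed.

Lemma coef_flatten (ws : seq (state R)) s :
  coef (flatten ws) s = \sum_(w <- ws) coef w s.
Proof.
elim: ws => [|w ws IH]; first by rewrite big_nil /coef big_nil.
by rewrite big_cons /= coef_cat IH.
Qed.

(* Zero coefficients are allowed outside [P]: states are not normalised. *)
Definition supported P v := all (fun p => (p.1 == 0) || P p.2) v.

Lemma coef_supported P v s : supported P v -> ~~ P s -> coef v s = 0.
Proof.
move=> /allP vP Ps; rewrite /coef big1_seq // => p /andP [/eqP ps pv].
by move: (vP p pv); rewrite ps (negbTE Ps) orbF => /eqP.
Qed.

Lemma supported_cat P v w : supported P (v ++ w) = supported P v && supported P w.
Proof. exact: all_cat. Qed.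

Lemma supported_flatten P (ws : seq (state R)) :
  supported P (flatten ws) = all (supported P) ws.
Proof. by elim: ws => //= w ws IH; rewrite supported_cat IH. Qed.

Lemma supported_sub P Q v :
  (forall s, P s -> Q s) -> supported P v -> supported Q v.
Proof.
move=> PQ /allP vP; apply/allP => p /vP.
by case/orP=> [-> // | /PQ ->]; rewrite orbT.
Qed.

Lemma supported_relabel P Q (f : mono -> mono) v :
  (forall s, P s -> Q (f s)) -> supported P v ->
  supported Q [seq (p.1, f p.2) | p <- v].
Proof.
move=> PQ /allP vP; rewrite /supported all_map; apply/allP => p /vP /=.
by case/orP=> [-> // | /PQ ->]; rewrite orbT.
Qed.

Lemma coef_filter (a : pred (R * mono)) v s :
  coef [seq p <- v | a p] s = \sum_(p <- v | a p && (p.2 == s)) p.1.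
Proof. by rewrite /coef big_filter_cond. Qed.

Lemma veq_single_split v M :
  coef v [::] = 0 -> (forall m, m != M -> coef v [:: m] = 0) ->
  veq v ((coef v [:: M], [:: M]) :: [seq p <- v | 1 < size p.2]%N).
Proof.
move=> v0 vm s; rewrite coef_cons coef_filter.
have [s_long | s_short] := ltnP 1 (size s).
  have -> : ([:: M] == s) = false by apply: contraTF s_long => /eqP <-.
  rewrite add0r /coef; apply: eq_bigl => p.
  by case: eqP => [->|]; rewrite ?s_long ?andbF.
rewrite big_pred0 => [|p]; last first.
  by case: eqP => [->|]; rewrite ?andbF // ltnNge s_short.
case: s s_short => [|m [|]] // _; first by rewrite v0 addr0.
rewrite eqseq_cons andbT eq_sym addr0.
by case: eqP => [-> // | /eqP /vm].
Qed.

End Coefficients.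

Section SemiRingCoefficients.
Variable R : pzSemiRingType.
Implicit Types (v : state R) (s : mono) (P Q : pred mono).

Lemma coef_scale (c : R) v s : coef (scale c v) s = c * coef v s.
Proof. by rewrite /coef /scale big_map mulr_sumr. Qed.

Lemma coef_act (f : mono -> state R) v s :
  coef (act f v) s = \sum_(p <- v) p.1 * coef (f p.2) s.
Proof.
rewrite /act coef_flatten big_map; apply: eq_bigr => p _.
by rewrite /coef big_map mulr_sumr.
Qed.

Lemma supported_scale P (c : R) v : supported P v -> supported P (scale c v).
Proof.
move=> /allP vP; rewrite /supported /scale all_map; apply/allP => p /vP /=.
by case/orP=> [/eqP -> | ->]; rewrite ?mulr0 ?eqxx ?orbT.
Qed.

Lemma supported_act P Q (f : mono -> state R) v :
  supported P v -> (forall s, P s -> supported Q (f s)) -> supported Q (act f v).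
Proof.
move=> /allP vP fPQ; rewrite /act supported_flatten all_map; apply/allP => p pv /=.
rewrite /supported all_map; apply/allP => q qf /=.
case/orP: (vP p pv) => [/eqP -> | /fPQ /allP /(_ q qf)]; first by rewrite mul0r eqxx.
by case/orP=> [/eqP -> | ->]; rewrite ?mulr0 ?eqxx ?orbT.
Qed.

Lemma sum_iota_indicator (x : R) j n :
  (j < n)%N -> \sum_(i <- iota 0 n) (i == j)%:R * x = x.
Proof.
move=> jn; rewrite (bigD1_seq j) ?mem_iota ?iota_uniq //= eqxx mul1r big1 ?addr0 //.
by move=> i /negbTE ->; rewrite mul0r.
Qed.

End SemiRingCoefficients.

Section Fock.
Variables (R : numClosedFieldType) (eta lam : R).

Lemma alpha_m_neg n s : (0 < n)%N ->
  alpha_m eta (- n%:Z) s = [:: (1, sort geq (n :: s))].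
Proof. by case: n => // n _; rewrite -NegzE. Qed.

Lemma alpha_neg n v : (0 < n)%N ->
  alpha eta (- n%:Z) v = [seq (p.1, sort geq (n :: p.2)) | p <- v].
Proof.
move=> n0; rewrite /alpha /act; elim: v => //= p v ->.
by rewrite alpha_m_neg //= mulr1.
Qed.

Lemma size_sort_cons n s : size (sort geq (n :: s)) = (size s).+1.
Proof. by rewrite size_sort. Qed.

Lemma sumn_sort_cons n s : sumn (sort geq (n :: s)) = (n + sumn s)%N.
Proof. by rewrite (perm_sumn (permEl (perm_sort _ _))). Qed.

Definition lowered (s : mono) (n : int) (s' : mono) :=
  ((sumn s')%:Z == (sumn s)%:Z - n) && (size s <= (size s').+1)%N.

Lemma alpha_m_supported n s : supported (lowered s n) (alpha_m eta n s).
Proof.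
rewrite /supported /lowered; case: n => [[|n]|n] /=; rewrite ?andbT.
- by rewrite subr0 eqxx leqnSn orbT.
- have [ns|ns] := boolP (n.+1 \in s); last by rewrite (count_memPn ns) muln0 eqxx.
  have /perm_sumn /= sum_s := perm_to_rem ns.
  rewrite size_rem // sum_s leqSpred andbT; apply/orP; right.
  apply/eqP; lia.
- rewrite size_sort_cons sumn_sort_cons NegzE; apply/orP; right.
  by apply/andP; split; [apply/eqP|]; lia.
Qed.

Lemma coef_alpha_neg_single n v m : (0 < n)%N ->
  coef (alpha eta (- n%:Z) v) [:: m] = (m == n)%:R * coef v [::].
Proof.
move=> n0; rewrite alpha_neg // /coef big_map big_mkcond [in RHS]big_mkcond mulr_sumr.
apply: eq_bigr => -[c [|x s]] _ /=.
- have -> : sort geq [:: n] = [:: n] by [].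
  by rewrite eqseq_cons andbT eq_sym; case: eqP; rewrite ?mulr1n ?mul1r ?mul0r.
- rewrite mulr0; case: eqP => // /(congr1 size).
  by rewrite size_sort_cons.
Qed.

Lemma coef_alpha_m_vac b : coef (alpha_m eta b [::]) [::] = (b == 0)%:R * eta.
Proof.
by case: b => [[|b]|b]; rewrite /= coef1 ?mul1r //= ?muln0 ?mul0r ?if_same.
Qed.

Lemma coef_alpha_m_one b u : (0 < u)%N ->
  coef (alpha_m eta b [:: u]) [::] = (b == u%:Z)%:R * u%:R.
Proof.
move=> u0; case: b => [[|b]|b]; rewrite /= coef1.
- by case: u u0 => // u _; rewrite mul0r.
- rewrite eqz_nat addn0; case: (eqVneq b.+1 u) => [<- | _].
    by rewrite eqxx muln1 mul1r.
  by rewrite mul0r.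
- by rewrite mul0r; case: ifP => // /eqP /(congr1 size); rewrite size_sort_cons.
Qed.

Lemma nopC a b s : nop eta a b s = nop eta b a s.
Proof. by rewrite /nop; case: ltgtP => // ->. Qed.

Lemma nop_le a b s : a <= b -> nop eta a b s = alpha eta a (alpha_m eta b s).
Proof. by rewrite le_eqVlt /nop => /predU1P [->|->]; rewrite ?ltxx. Qed.

(* With [a <= b] and [a + b < 0], the mode [alpha_a] acting last in
   [:alpha_a alpha_b:] is a creation operator. *)
Lemma coef_nop_single a b s m t : (0 < t)%N -> a + b = - t%:Z -> a <= b ->
  coef (nop eta a b s) [:: m] = (m%:Z == - a)%:R * coef (alpha_m eta b s) [::].
Proof.
move=> t0; case: a => [n|n] abt ab; first by exfalso; lia.
by rewrite NegzE nop_le -?NegzE // NegzE coef_alpha_neg_single // opprK eqz_nat.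
Qed.

Lemma coef_nop_vac a b t : (0 < t)%N -> a + b = - t%:Z ->
  coef (nop eta a b [::]) [:: t] = (a == 0)%:R * eta + (b == 0)%:R * eta.
Proof.
move=> t0; wlog ab : a b / a <= b => [hyp abt | abt].
  case: (leP a b) => [ab | /ltW ba]; first exact: hyp.
  by rewrite nopC [RHS]addrC hyp // addrC.
rewrite (coef_nop_single _ _ t0) // coef_alpha_m_vac.
have /negbTE -> : a != 0 by lia.
rewrite mul0r add0r; case: (eqVneq b 0) => [b0 | _]; last by rewrite !mul0r mulr0.
have -> : (t%:Z == - a) = true by apply/eqP; lia.
by rewrite mulr1n mul1r.
Qed.

Lemma coef_nop_one a b t u : (0 < t)%N -> (0 < u)%N -> a + b = - t%:Z ->
  coef (nop eta a b [:: u]) [:: u + t] = (a == u%:Z)%:R * u%:R + (b == u%:Z)%:R * u%:R.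
Proof.
move=> t0 u0; wlog ab : a b / a <= b => [hyp abt | abt].
  case: (leP a b) => [ab | /ltW ba]; first exact: hyp.
  by rewrite nopC [RHS]addrC hyp // addrC.
rewrite (coef_nop_single _ _ t0) // coef_alpha_m_one //.
have /negbTE -> : a != u%:Z by lia.
rewrite mul0r add0r; case: (eqVneq b u%:Z) => [bu | _]; last by rewrite !mul0r mulr0.
have -> : ((u + t)%:Z == - a) = true by apply/eqP; lia.
by rewrite mulr1n mul1r.
Qed.

Definition raised (s : mono) (t : nat) (s' : mono) :=
  (sumn s' == sumn s + t)%N && (size s <= size s')%N.

Lemma nop_supported a b s t : (0 < t)%N -> a + b = - t%:Z ->
  supported (raised s t) (nop eta a b s).
Proof.
move=> t0; wlog ab : a b / a <= b => [hyp abt | abt].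
  case: (leP a b) => [ab | /ltW ba]; first exact: hyp.
  by rewrite nopC hyp // addrC.
case: a ab abt => [n|n] ab abt; first by exfalso; lia.
rewrite NegzE nop_le -?NegzE // NegzE alpha_neg //.
apply: (supported_relabel (f := fun s' => sort geq (n.+1 :: s')) _ (alpha_m_supported b s)).
move=> s' /andP [/eqP sum_s' size_s'].
rewrite /raised size_sort_cons sumn_sort_cons; apply/andP; split; [apply/eqP|]; lia.
Qed.

Lemma L_m_supported t s : (0 < t)%N ->
  supported (raised s t) (L_m eta lam (- t%:Z) s).
Proof.
move=> t0; rewrite /L_m supported_cat; apply/andP; split; apply: supported_scale.
  rewrite supported_flatten all_map; apply/allP => i _ /=.
  by apply: nop_supported; rewrite // addrC subrK.
rewrite alpha_m_neg // /supported /= andbT /raised size_sort_cons sumn_sort_cons.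
by rewrite addnC eqxx leqnSn orbT.
Qed.

Lemma coef_L_m_vac t : (0 < t)%N ->
  coef (L_m eta lam (- t%:Z) [::]) [:: t] = eta + (t%:R - 1) * lam.
Proof.
move=> t0; rewrite /L_m coef_cat !coef_scale coef_flatten big_map.
rewrite abszN absz_nat addn0.
rewrite (eq_bigr (fun i => (i == t)%:R * eta + (i == 0)%N%:R * eta)) => [|i _]; last first.
  rewrite coef_nop_vac //; last by rewrite addrC subrK.
  by congr (_ + _); congr ((nat_of_bool _)%:R * _); apply/eqP/eqP; lia.
rewrite big_split !sum_iota_indicator /=; try lia.
rewrite alpha_m_neg // coef1 eqxx intrD intrN mulr1.
have two0 : (2%:R : R) != 0 by rewrite pnatr_eq0.
by field.
Qed.

Lemma coef_L_m_one t u : (0 < t)%N -> (0 < u)%N ->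
  coef (L_m eta lam (- t%:Z) [:: u]) [:: u + t] = u%:R.
Proof.
move=> t0 u0; rewrite /L_m [sumn _]/= addn0.
rewrite coef_cat !coef_scale coef_flatten big_map abszN absz_nat.
rewrite (eq_bigr (fun i => (i == t + u + u)%:R * u%:R + (i == 0)%N%:R * u%:R)) => [|i _].
  rewrite big_split !sum_iota_indicator /=; try lia.
  rewrite alpha_m_neg // coef1 (_ : (_ == _) = false) ?mulr0 ?addr0; last first.
    by apply: contraTF isT => /eqP /(congr1 size); rewrite size_sort_cons.
  have two0 : (2%:R : R) != 0 by rewrite pnatr_eq0.
  by field.
rewrite coef_nop_one //; last by rewrite addrC subrK.
by congr (_ + _); congr ((nat_of_bool _)%:R * _); apply/eqP/eqP; lia.
Qed.

Lemma coef_L_m_long t s m : (0 < t)%N -> (1 < size s)%N ->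
  coef (L_m eta lam (- t%:Z) s) [:: m] = 0.
Proof.
move=> t0 s_long; apply: coef_supported (L_m_supported s t0) _.
by rewrite /raised negb_and -ltnNge s_long orbT.
Qed.

Lemma Lword_cons t tau :
  Lword eta lam (t :: tau) = Lop eta lam (- t%:Z) (Lword eta lam tau).
Proof. by []. Qed.

Lemma Lword_supported tau : all (fun t => 0 < t)%N tau ->
  supported (fun s => sumn s == sumn tau) (Lword eta lam tau).
Proof.
elim: tau => [|t tau IH] /=; first by rewrite /supported /= eqxx orbT.
case/andP=> t0 /IH tauP; apply: (supported_act tauP) => s /eqP sum_s.
apply: supported_sub (L_m_supported s t0) => s' /andP [/eqP sum_s' _].
by rewrite sum_s' sum_s addnC.
Qed.

(* Monomials of length >= 2 cannot contribute, as [L_{-t}] never shortens one. *)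
Lemma coef_Lop_single v w t : (0 < w)%N -> (0 < t)%N ->
  supported (fun s => sumn s == w) v ->
  coef (Lop eta lam (- t%:Z) v) [:: w + t] = w%:R * coef v [:: w].
Proof.
move=> w0 t0 /allP vw.
rewrite /Lop coef_act [in RHS]/coef [in RHS]big_mkcond mulr_sumr.
apply: eq_big_seq => -[c s] /vw /= /orP [/eqP -> | /eqP sum_s].
  by rewrite mul0r if_same mulr0.
case: s sum_s => [|u [|x s]] /= sum_s.
- by move: w0; rewrite -sum_s.
- by move: sum_s; rewrite addn0 => ->; rewrite coef_L_m_one // eqxx mulrC.
- by rewrite coef_L_m_long // eqseq_cons /= andbF !mulr0.
Qed.

Lemma tfact_cons t tau : tfact (t :: tau) = (sumn (t :: tau) * tfact tau)%N.
Proof. by rewrite /tfact big_ord_recl. Qed.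

Lemma coef_Lword_lead t tau : all (fun t => 0 < t)%N (t :: tau) ->
  coef (Lword eta lam (t :: tau)) [:: sumn (t :: tau)] =
  (tfact tau)%:R * (eta + ((last t tau)%:R - 1) * lam).
Proof.
elim: tau t => [|u tau IH] t /andP [t0 tauP].
  rewrite Lword_cons /Lop coef_act big_cons big_nil /= addn0 addr0 mul1r.
  by rewrite coef_L_m_vac // /tfact big_ord0 mul1r.
have sum_pos : (0 < sumn (u :: tau))%N by case/andP: tauP => /= u0 _; lia.
have -> : sumn [:: t, u & tau] = (sumn (u :: tau) + t)%N by rewrite /= addnC.
rewrite Lword_cons coef_Lop_single ?Lword_supported // IH //.
by rewrite tfact_cons natrM mulrA.
Qed.

Lemma Lword_expansion tau : (0 < size tau)%N -> all (fun t => 0 < t)%N tau ->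
  exists Rest : state R,
    all (fun p => 1 < size p.2)%N Rest /\
    veq (Lword eta lam tau)
      ((((\prod_(1 <= i < size tau) sumn (drop i tau))%N)%:R
          * (eta + ((last 0%N tau)%:R - 1) * lam), [:: sumn tau]) :: Rest).
Proof.
case: tau => // t tau _ tauP.
exists [seq p <- Lword eta lam (t :: tau) | 1 < size p.2]%N; split.
  exact: filter_all.
have weight := Lword_supported tauP.
rewrite big_add1 /= big_mkord -/(tfact tau) -coef_Lword_lead //.
apply: veq_single_split => [|m m_ne]; apply: (coef_supported weight) => //=.
  by case/andP: tauP => t0 _; rewrite eq_sym -lt0n; lia.
by rewrite addn0.
Qed.

Lemma coef_Ustate Us s :
  coef (Ustate eta lam Us) s = \sum_(p <- Us) p.1 * coef (Lword eta lam p.2) s.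
Proof.
by rewrite /Ustate coef_flatten big_map; apply: eq_bigr => p _; rewrite coef_scale.
Qed.

End Fock.

Theorem mainTheorem4 (R : numClosedFieldType) (eta lam : R) :
  (forall tau : seq nat, (0 < size tau)%N -> all (fun t => 0 < t)%N tau ->
     exists Rest : state R,
       all (fun p => 1 < size p.2)%N Rest /\
       veq (Lword eta lam tau)
         ((((\prod_(1 <= i < size tau) sumn (drop i tau))%N)%:R
             * (eta + ((last 0%N tau)%:R - 1) * lam), [:: sumn tau]) :: Rest))
  /\
  (forall dh : int, dh < 0 ->
     forall Us : seq (R * seq nat),
       all (fun p => is_partition p.2 && (sumn p.2 == `|dh|)%N) Us ->
       coef (Ustate eta lam Us) [:: `|dh|%N] =
         - (dh%:~R)^-1 *
           \sum_(p <- Us) (tfact p.2)%:R * (eta + ((last 0%N p.2)%:R - 1) * lam) * p.1).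
Proof.
split; first exact: Lword_expansion.
move=> dh dh0 Us /allP UsP.
have dh_abs : dh = - (`|dh|%N)%:Z by rewrite ltz0_abs ?opprK.
have -> : dh%:~R = - (`|dh|%N%:R : R) by rewrite {1}dh_abs intrN.
rewrite coef_Ustate invrN opprK mulr_sumr; apply: eq_big_seq => -[c [|t tau]].
  by move=> /UsP /andP [_ /eqP /= abs0]; lia.
move=> /UsP /andP [/andP [_ tauP] /eqP <-] /=.
rewrite coef_Lword_lead // tfact_cons natrM.
have sum_ne0 : ((t + sumn tau)%:R : R) != 0.
  by rewrite pnatr_eq0 -lt0n; case/andP: tauP; lia.
by rewrite [sumn (_ :: _)]/=; field; rewrite -natrD.
Qed.
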